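(* Let $\sigma$ be the substitution $a\mapsto abab$, $b\mapsto b$ with fixed point $\mathbf{z}=\sigma^\omega(a)$, and $Z$ the orbit closure of $\mathbf{z}$. Define $p_1=a$ and $p_{k+1}=p_kb^kp_k$, so $\mathbf{z}=\lim_k p_k$. Then for every $k\ge1$, a word of the form $uab^k$ (with $u\in\{a,b\}^*$) is a right special factor of $\mathcal{L}(Z)$ if and only if it is a suffix of $b^kp_kb^k$.
   Context: $\mathcal{L}(Z)$ is the set of finite factors of $\mathbf{z}$ (equivalently of elements of $Z$). A word $w\in\mathcal{L}(Z)$ is right special if both $wa$ and $wb$ belong to $\mathcal{L}(Z)$. *)

From mathcomp Require Import all_boot.
Set Implicit Arguments. Unset Strict Implicit. Unset Printing Implicit Defensive.

Definition letter := bool.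
Definition la : letter := false.
Definition lb : letter := true.

Definition sigma_letter (x : letter) : seq letter :=
  if x == la then [:: la; lb; la; lb] else [:: lb].
Definition sigma (w : seq letter) : seq letter := flatten (map sigma_letter w).

(* The fixed point z = sigma^omega(a): the i-th letter of z is the i-th letter
   of sigma^(i+1)(a) (which has length > i, and sigma^n(a) is a prefix of
   sigma^(n+1)(a)). *)
Definition z (i : nat) : letter := nth la (iter i.+1 sigma [:: la]) i.

Definition inL (w : seq letter) : Prop :=
  exists i, w = mkseq (fun j => z (i + j)) (size w).

Definition right_special (w : seq letter) : Prop :=
  inL (rcons w la) /\ inL (rcons w lb).

(* p_1 = a, p_{k+1} = p_k b^k p_k  (p 0 is a dummy equal to p 1). *)
Fixpoint p (k : nat) : seq letter :=
  match k with
  | 0 | 1 => [:: la]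
  | k'.+1 => p k' ++ nseq k' lb ++ p k'
  end.

From mathcomp Require Import all_boot zify.

Set Implicit Arguments. Unset Strict Implicit. Unset Printing Implicit Defensive.

(* 1. The language.  sigma(p_k) = p_{k+1} b, hence sigma^n(a) = p_{n+1} b^n;
      as p_k is a prefix of p_{k+1}, z is the limit of the p_k and a word is a
      factor of z iff it is a factor of some p_l (inL_infix_p).
   2. Occurrences.  In p_{l+1} = p_l b^l p_l an occurrence of a word a b^m c
      lies in one of the two copies of p_l or starts at the last letter of the
      left copy (p_occurrence_split).  By induction on l, the left context of
      an occurrence of a b^{k+1} ends with a b^k p_k (before_abk1), and that
      of an occurrence of a b^k a ends with b^{k+1} p_k (before_abka).
   3. The theorem.  If u a b^k is right special, then u a is a common suffix
      of words ending with b (b^k p_k) and with a (b^k p_k), hence a suffix of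
      b^k p_k (suffix_of_branching).  Conversely both b^k p_k b^k a and
      b^k p_k b^{k+1} occur in p_{k+2} (p_factors). *)

Lemma cat_eq_cat (T : Type) (s1 s2 x t : seq T) : s1 ++ s2 = x ++ t ->
  (exists m, x = s1 ++ m /\ s2 = m ++ t) \/ (exists m, s1 = x ++ m /\ t = m ++ s2).
Proof.
elim: s1 x => [|c s1 IH] [|d x] /= E.
- by left; exists [::].
- by left; exists (d :: x).
- by right; exists (c :: s1).
- case: E => <- /IH [[m [-> ->]] | [m [-> ->]]]; [left | right]; by exists m.
Qed.

Lemma suffix_comparable (T : eqType) (s1 s2 w : seq T) :
  suffix s1 w -> suffix s2 w -> size s1 <= size s2 -> suffix s1 s2.
Proof.
rewrite /suffix !prefixE => /eqP E1 /eqP E2 le12.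
by rewrite -E2 take_takel ?E1 // !size_rev.
Qed.

Lemma suffix_of_branching (T : eqType) (x y : T) (s t w1 w2 : seq T) : x != y ->
  suffix (x :: t) w1 -> suffix s w1 -> suffix (y :: t) w2 -> suffix s w2 ->
  suffix s t.
Proof.
move=> neq_xy xt_w1 s_w1 yt_w2 s_w2.
case: (leqP (size s) (size t)) => [le_st | lt_ts].
  apply: (@suffix_comparable _ _ _ (x :: t)) => //.
    exact: suffix_comparable s_w1 xt_w1 (leqW le_st).
  exact: suffix_cons.
have xt_s := suffix_comparable xt_w1 s_w1 lt_ts.
have yt_s := suffix_comparable yt_w2 s_w2 lt_ts.
have := suffix_comparable xt_s yt_s (leqnn _).
by rewrite -cat1s -[y :: t]cat1s suffix_catl // eqxx /suffix /= (negPf neq_xy).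
Qed.

Lemma nth_prefix (T : eqType) (x0 : T) (s t : seq T) i :
  prefix s t -> i < size s -> nth x0 s i = nth x0 t i.
Proof. by move=> /prefixP [r ->] lt_i; rewrite nth_cat lt_i. Qed.

Lemma la_notin_b n : la \notin nseq n lb.
Proof. by rewrite mem_nseq andbF. Qed.

Lemma b_run_le m n t r : nseq m lb ++ t = nseq n lb ++ la :: r -> m <= n.
Proof. by elim: m n => [|m IH] [|n] //= [] /IH. Qed.

Lemma pS k : 1 <= k -> p k.+1 = p k ++ nseq k lb ++ p k.
Proof. by case: k. Qed.

Lemma p_head k : exists r, p k = la :: r.
Proof.
elim: k => [|[|k] [r IH]]; [by exists [::] | by exists [::] |].
by rewrite pS // IH; eexists.
Qed.

Lemma p_last k : exists r, p k = rcons r la.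
Proof.
elim: k => [|[|k] [r IH]]; [by exists [::] | by exists [::] |].
by rewrite pS // IH -cats1 !catA cats1; eexists.
Qed.

Lemma size_p k : k <= size (p k).
Proof.
elim: k => [|[|k] IH] //; have [r hd] := p_head k.+1.
by rewrite pS // !size_cat size_nseq hd /=; lia.
Qed.

Lemma prefix_p k l : k <= l -> prefix (p k) (p l).
Proof.
have prefix_pS j : prefix (p j) (p j.+1).
  by case: j => [|j] //; rewrite (pS (k := j.+1)) // prefix_prefix.
elim: l => [|l IH]; first by rewrite leqn0 => /eqP ->; exact: prefix_refl.
rewrite leq_eqVlt => /orP [/eqP -> | /IH k_l]; first exact: prefix_refl.
exact: prefix_trans k_l (prefix_pS l).
Qed.

(* Since p_k ends with a, no nonempty suffix of p_k consists of b's only. *)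
Lemma la_in_p_suffix k s t : p k = s ++ t -> t <> [::] -> la \in t.
Proof.
have [r ->] := p_last k; case/lastP: t => [|t c] // + _.
by rewrite -rcons_cat => /rcons_inj [_ ->]; rewrite mem_rcons mem_head.
Qed.

(* A factor c s d of some p_l has two letters, which p_0 = p_1 = a lacks. *)
Lemma p_ge2 k x c s d y : p k = x ++ c :: s ++ d :: y -> 2 <= k.
Proof.
case: k => [|[|k]] // /(congr1 size); rewrite /= size_cat /= size_cat /=; lia.
Qed.

(* The prefix p_k is followed in p_{k+1} by b^k p_k, so every later p_l
   ends with a b^k p_k. *)
Lemma p_suffix k l : 1 <= k < l -> suffix (la :: nseq k lb ++ p k) (p l).
Proof.
case/andP=> k_gt0; elim: l => [|l IH] //; rewrite ltnS leq_eqVlt.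
case/orP=> [/eqP <- | lt_kl].
  have [r def_pk] := p_last k.
  by rewrite pS // {2}def_pk -cats1 -catA; exact: suffix_suffix.
rewrite pS; last exact: leq_trans lt_kl.
by do 2 apply: suffix_catr; apply: IH.
Qed.

Lemma sigma_cat s t : sigma (s ++ t) = sigma s ++ sigma t.
Proof. by rewrite /sigma map_cat flatten_cat. Qed.

Lemma sigma_nseq n : sigma (nseq n lb) = nseq n lb.
Proof. by elim: n => [|n IH] //; rewrite -addn1 nseqD sigma_cat IH -nseqD. Qed.

Lemma sigma_p k : 1 <= k -> sigma (p k) = p k.+1 ++ [:: lb].
Proof.
elim: k => [|[|k] IH] // _.
by rewrite pS // !sigma_cat sigma_nseq IH // (pS (k := k.+2)) // -!catA.
Qed.

Lemma iter_sigma n : iter n sigma [:: la] = p n.+1 ++ nseq n lb.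
Proof.
elim: n => [|n IH] //.
by rewrite iterS IH sigma_cat sigma_p // sigma_nseq -catA.
Qed.

Lemma z_p k i : i < size (p k) -> z i = nth la (p k) i.
Proof.
move=> lt_i; have lt_i2 : i < size (p i.+2) by have := size_p i.+2; lia.
rewrite /z iter_sigma nth_cat lt_i2.
rewrite (nth_prefix _ (prefix_p (leq_maxr k i.+2)) lt_i2).
by rewrite (nth_prefix _ (prefix_p (leq_maxl k i.+2)) lt_i).
Qed.

Lemma inL_infix_p w : inL w <-> exists k, infix w (p k).
Proof.
split=> [[i def_w] | [k /infixP [x [y def_p]]]].
  pose k := i + size w; exists k.
  have size_k : k <= size (p k) := size_p k.
  suff -> : w = take (size w) (drop i (p k)).
    exact: infix_trans (infix_take _ _) (suffixW (suffix_drop _ _)).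
  apply: (@eq_from_nth _ la); first by rewrite size_takel // size_drop; lia.
  move=> j lt_j; rewrite nth_take // nth_drop {1}def_w nth_mkseq //.
  by apply: z_p; lia.
exists (size x); apply: (@eq_from_nth _ la); first by rewrite size_mkseq.
move=> j lt_j; rewrite nth_mkseq // (z_p (k := k)); last first.
  by rewrite def_p !size_cat ltn_add2l ltn_addr.
by rewrite def_p nth_cat ltnNge leq_addr /= addKn nth_cat lt_j.
Qed.

Lemma p_occurrence_split l m c x y : 1 <= l ->
  p l.+1 = x ++ la :: nseq m lb ++ c :: y ->
  [\/ exists y', p l = x ++ la :: nseq m lb ++ c :: y',
      exists x', x = p l ++ nseq l lb ++ x' /\ p l = x' ++ la :: nseq m lb ++ c :: y
    | rcons x la = p l /\ nseq m lb ++ c :: y = nseq l lb ++ p l].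
Proof.
move=> l_gt0; rewrite pS // => def_p.
case: (cat_eq_cat def_p) => [[x1 [def_x def_bp]] | [w [def_pl def_w]]].
  case: (cat_eq_cat def_bp) => [[x' [def_x1 def_pl]] | [[|d w] [def_b def_w]]].
  - by apply: Or32; exists x'; rewrite def_x def_x1.
  - apply: Or32; exists [::]; rewrite cats0 in def_b.
    by rewrite def_x def_b cats0 def_w.
  - case: def_w => def_d _.
    by have := la_notin_b l; rewrite def_b def_d mem_cat mem_head orbT.
case: w def_pl def_w => [|d w] def_pl.
  by case: {def_p def_pl} l l_gt0 => //= l _ [].
case=> def_d; subst d; case: w def_pl => [|e w] def_pl def_w.
  by apply: Or33; split; [rewrite def_pl cats1 | rewrite def_w].
have la_ew : la \in e :: w.
  by apply: (la_in_p_suffix (k := l) (s := x ++ [:: la])); rewrite // -catA.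
case: (cat_eq_cat (esym def_w)) => [[mm [def_b _]] | [[|c' y'] [def_ew def_cy]]].
- by have := la_notin_b m; rewrite def_b mem_cat la_ew.
- by have := la_notin_b m; rewrite -(cats0 (nseq m lb)) -def_ew la_ew.
- by apply: Or31; exists y'; case: def_cy => -> _; rewrite def_pl def_ew.
Qed.

(* Every occurrence of a b^{k+1} in p_l is preceded by a b^k p_k (the final a
   of p_k being the first letter of the occurrence). *)
Lemma before_abk1 k l x y : 1 <= k ->
  p l = x ++ la :: nseq k lb ++ lb :: y -> suffix (la :: nseq k lb ++ p k) (rcons x la).
Proof.
move=> k_gt0; elim: l x y => [|l IH] x y def_p; first by have := p_ge2 def_p.
have l_gt0 : 0 < l by have := p_ge2 def_p.
case: (p_occurrence_split l_gt0 def_p) => [[y' /IH] | [x' [-> /IH]] | [def_x def_w]] //.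
  by rewrite !rcons_cat => ?; do 2 apply: suffix_catr.
rewrite def_x; apply: p_suffix; rewrite k_gt0 /=.
have [r hd] := p_head l.
by apply: (@b_run_le _ _ y r); rewrite -addn1 nseqD -catA def_w hd.
Qed.

Lemma before_abka k l x y :
  p l = x ++ la :: nseq k lb ++ la :: y -> suffix (nseq k.+1 lb ++ p k) (nseq l lb ++ rcons x la).
Proof.
elim: l x y => [|l IH] x y def_p; first by have := p_ge2 def_p.
have l_gt0 : 0 < l by have := p_ge2 def_p.
case: (p_occurrence_split l_gt0 def_p) => [[y' /IH] | [x' [-> /IH]] | [def_x def_w]].
- by move=> before_x; apply: (suffix_trans before_x); exact: suffix_cons.
- by rewrite !rcons_cat => ?; do 2 apply: suffix_catr.
rewrite def_x; have [r hd] := p_head l; rewrite hd in def_w.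
suff -> : k = l by apply: suffix_refl.
by apply/eqP; rewrite eqn_leq (b_run_le def_w) (b_run_le (esym def_w)).
Qed.

(* p_{k+2} = p_k b^k p_k b^{k+1} p_k b^k p_k contains both right extensions
   of b^k p_k b^k. *)
Lemma p_factors k : 1 <= k ->
  infix (nseq k lb ++ p k ++ nseq k lb ++ [:: la]) (p k.+2) /\
  infix (nseq k lb ++ p k ++ nseq k.+1 lb) (p k.+2).
Proof.
move=> k_gt0; have [r hd] := p_head k.
have def_p : p k.+2 = p k ++ nseq k lb ++ p k ++ nseq k.+1 lb ++ p k ++ nseq k lb ++ p k.
  by rewrite pS // pS // -!catA.
split; apply/infixP; rewrite def_p.
  exists (p k ++ nseq k lb ++ p k ++ [:: lb]), r.
  by rewrite {4}hd -!catA.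
by exists (p k), (p k ++ nseq k lb ++ p k); rewrite -!catA.
Qed.

Theorem mainTheorem8 (k : nat) (u : seq letter) : 1 <= k ->
  right_special (u ++ la :: nseq k lb) <->
  suffix (u ++ la :: nseq k lb) (nseq k lb ++ p k ++ nseq k lb).
Proof.
move=> k_gt0.
have -> : u ++ la :: nseq k lb = rcons u la ++ nseq k lb by rewrite -cats1 -catA.
rewrite catA suffix_catl // eqxx /= /right_special !inL_infix_p.
split=> [[[l /infixP [x [y def_a]]] [l' /infixP [x' [y' def_b]]]] | u_suffix].
  have {}def_a : p l = (x ++ u) ++ la :: nseq k lb ++ la :: y.
    by rewrite def_a -!cats1 -!catA.
  have {}def_b : p l' = (x' ++ u) ++ la :: nseq k lb ++ lb :: y'.
    by rewrite def_b -!cats1 -!catA.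
  by apply: (suffix_of_branching _ (before_abka def_a) _ (before_abk1 k_gt0 def_b));
    rewrite // rcons_cat ?catA suffix_suffix.
have extend c : suffix (rcons (rcons u la ++ nseq k lb) c)
                       (rcons ((nseq k lb ++ p k) ++ nseq k lb) c).
  by rewrite !rcons_cat suffix_catl // eqxx.
have [a_ext b_ext] := p_factors k_gt0.
split; exists k.+2; apply: infix_trans (suffixW (extend _)) _.
  by rewrite -cats1 -!catA.
by rewrite -cats1 -!catA -[nseq k lb ++ [:: lb]]/(nseq k lb ++ nseq 1 lb) -nseqD addn1.
Qed.
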